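(* Let $N,n_h,n_l$ be positive integers, $r\in\mathbb{R}^N$, and $R\in\mathbb{R}^{N\times n_h}$ with $R_{t,k}=r_{t-k+1}$ for $t\ge k$ and $R_{t,k}=0$ otherwise; assume $R^\top R$ is invertible. Let $\sigma^2>0$, $E:=R(R^\top R)^{-2}R^\top$ and $c:=\mathrm{tr}(\sigma^2(R^\top R)^{-1})$. For $l=(l_0,\dots,l_{n_l-1})^\top$ let $L(l)\in\mathbb{R}^{N\times(N+n_l-1)}$ have entries $L_{t,s}=l_{t+n_l-1-s}$ if $0\le t+n_l-1-s\le n_l-1$ and $0$ otherwise, let $Q_l$ be the $0/1$ selection matrix with $\mathrm{vec}(L(l))=Q_l l$ (column stacking), and set $M:=Q_l^\top(I_{N+n_l-1}\otimes E)Q_l$. Let $\gamma_2>0$, let $\lambda_1\ge\lambda_2\ge\dots\ge\lambda_{n_l}\ge0$ be the eigenvalues of $M$ and $v_1$ a unit-norm eigenvector for $\lambda_1$. Then a minimizer over $l\in\mathbb{R}^{n_l}$ of $(l^\top M l+c)^{-1}+\gamma_2\|l\|^2$ is $l^*=0$ if $\lambda_1\le\gamma_2c^2$, and $l^*=\sqrt{1/\sqrt{\gamma_2\lambda_1}-c/\lambda_1}\;v_1$ otherwise.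
   Context: $\otimes$ is the Kronecker product and $\|\cdot\|$ the Euclidean norm. $\gamma_2$ weights output-variance degradation against the (inverse) identification error. *)

From mathcomp Require Import all_boot all_order all_algebra.
From mathcomp Require Export mxtens.
Set Implicit Arguments. Unset Strict Implicit. Unset Printing Implicit Defensive.
Import Order.TTheory GRing.Theory Num.Theory.
Local Open Scope ring_scope.

(* 0-based access to a column vector; out of range gives 0 (never used
   out of range below). *)
Definition cvget (R : pzRingType) n (v : 'cV[R]_n) (i : nat) : R :=
  if @insub _ (fun k => k < n)%N _ i is Some j then v j 0 else 0.

(* R in R^{N x n_h}: R_{t,k} = r_{t-k+1} for t >= k (1-based),
   i.e. 0-based: R t k = r_(t-k) for k <= t. *)
Definition toepR (R : pzRingType) N nh (r : 'cV[R]_N) : 'M[R]_(N, nh) :=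
  \matrix_(t < N, k < nh) (if (k <= t)%N then cvget r (t - k) else 0).

Definition Lmat (R : pzRingType) N nl (l : 'cV[R]_nl) : 'M[R]_(N, N + nl.-1) :=
  \matrix_(t < N, s < N + nl.-1)
    (if (s <= t + nl.-1)%N && (t + nl.-1 - s <= nl.-1)%N
     then cvget l (t + nl.-1 - s) else 0).

(* column-stacking vectorization vec(A) *)
Definition vecc (R : pzRingType) m n (A : 'M[R]_(m, n)) : 'cV[R]_(n * m) :=
  (mxvec A^T)^T.

(* Q_l : the 0/1 selection matrix with vec(L(l)) = Q_l l; its j-th column
   is vec(L(e_j)). *)
Definition Qmat (R : pzRingType) N nl : 'M[R]_((N + nl.-1) * N, nl) :=
  \matrix_(i, j) vecc (Lmat N (delta_mx j 0 : 'cV[R]_nl)) i 0.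

Definition Emat (R : comUnitRingType) N nh (Rm : 'M[R]_(N, nh)) : 'M[R]_N :=
  Rm *m (invmx (Rm^T *m Rm) *m invmx (Rm^T *m Rm)) *m Rm^T.

Definition Mmat (R : comUnitRingType) N nl (E : 'M[R]_N) : 'M[R]_nl :=
  (Qmat R N nl)^T *m (tensmx (1%:M : 'M[R]_(N + nl.-1)) E) *m Qmat R N nl.

Definition sqnorm (R : pzRingType) n (v : 'cV[R]_n) : R := \sum_(i < n) v i 0 ^+ 2.

Definition objective (R : fieldType) nl (M : 'M[R]_nl) (c gamma2 : R)
  (l : 'cV[R]_nl) : R :=
  ((l^T *m M *m l) 0 0 + c)^-1 + gamma2 * sqnorm l.

From mathcomp Require Import all_boot all_order all_algebra.
From mathcomp Require Import complex ring lra.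

(** Since [E = X X^T] with [X = R (R^T R)^-1], the matrix [M] is a Gram matrix,
    hence symmetric positive semidefinite, and [c = sigma2 tr (X^T X) > 0].
    The spectral theorem (applied in [R[i]]) gives [l^T M l <= lam1 |l|^2], and
    since [(p + c)^-1] decreases in [p] the objective at [l] is at least
    [phi |l|^2] where [phi s = (lam1 s + c)^-1 + gamma2 s], with equality for
    multiples of [v1]. On [s >= 0], [phi] is minimal at [0] when
    [lam1 <= gamma2 c^2], and otherwise at [s* = 1/sqrt(gamma2 lam1) - c/lam1],
    where [phi s - phi s*] is a perfect square divided by a positive number. *)

Set Implicit Arguments.
Unset Strict Implicit.
Unset Printing Implicit Defensive.

Import Order.TTheory GRing.Theory Num.Theory.
Local Open Scope ring_scope.

Lemma sqnormE (R : pzRingType) n (v : 'cV[R]_n) : sqnorm v = (v^T *m v) 0 0.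
Proof. by rewrite /sqnorm mxE; apply: eq_bigr => i _; rewrite !mxE expr2. Qed.

Lemma sqnormZ (R : comPzRingType) n (k : R) (v : 'cV[R]_n) :
  sqnorm (k *: v) = k ^+ 2 * sqnorm v.
Proof. by rewrite /sqnorm mulr_sumr; apply: eq_bigr => i _; rewrite mxE exprMn. Qed.

Lemma sqnorm_ge0 (R : realDomainType) n (v : 'cV[R]_n) : 0 <= sqnorm v.
Proof. by apply: sumr_ge0 => i _; exact: sqr_ge0. Qed.

Lemma sqnorm_eq0 (R : realDomainType) n (v : 'cV[R]_n) : sqnorm v = 0 -> v = 0.
Proof.
move=> /psumr_eq0P v0; apply/colP => i; rewrite mxE.
by apply/eqP; rewrite -sqrf_eq0 v0 // => j _; exact: sqr_ge0.
Qed.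

Lemma gram_quad_ge0 (R : realDomainType) m n (Y : 'M[R]_(m, n)) (x : 'cV_n) :
  0 <= (x^T *m (Y^T *m Y) *m x) 0 0.
Proof. by rewrite mulmxA -trmx_mul -mulmxA -sqnormE sqnorm_ge0. Qed.

Lemma mxtrace_gram_gt0 (R : realFieldType) m n (X : 'M[R]_(m, n)) :
  (0 < n)%N -> X^T *m X \in unitmx -> 0 < \tr (X^T *m X).
Proof.
case: n X => // n X _ XX_unit.
have trE : \tr (X^T *m X) = \sum_i sqnorm (col i X).
  by apply: eq_bigr => i _; rewrite sqnormE !mxE; apply: eq_bigr => j _; rewrite !mxE.
rewrite lt_def trE sumr_ge0 ?andbT => [|i _]; last exact: sqnorm_ge0.
apply: contraTneq XX_unit => /(psumr_eq0P (fun i _ => sqnorm_ge0 (col i X))) col0.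
suff -> : X = 0 by rewrite mulmx0 unitmxE det0 unitr0.
apply/matrixP => j i; rewrite mxE.
by have /colP/(_ j) := sqnorm_eq0 (col0 i isT); rewrite !mxE.
Qed.

Section Rayleigh.
Local Open Scope sesquilinear_scope.

Section NormalQuadForm.
Context {C : numClosedFieldType} {n : nat} {A : 'M[C]_n}.
Hypothesis A_normal : A \is normalmx.
Let P := spectralmx A.
Let d := spectral_diag A.

Lemma eigenvalue_spectral_diag j : eigenvalue A (d 0 j).
Proof.
have /orthomx_spectralP A_eq := A_normal.
have P_unit : P \in unitmx := spectral_unit A.
apply/eigenvalueP; exists (row j P).
  by rewrite -row_mul {1}A_eq !mulmxA mulmxV // mul1mx row_mul row_diag_mx
    -scalemxAl -rowE.
apply: contraTneq P_unit => Pj0; rewrite unitmxE unitfE negbK.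
apply/eqP; rewrite (expand_det_row _ j); apply: big1 => k _.
by move/rowP/(_ k): Pj0; rewrite !mxE => ->; rewrite mul0r.
Qed.

Lemma normalmx_quad_le (a : C) (x : 'cV[C]_n) :
  (forall j, d 0 j <= a) ->
  (x ^t* *m A *m x) 0 0 <= a * (x ^t* *m x) 0 0.
Proof.
move=> d_le_a.
have /orthomx_spectralP A_eq := A_normal.
have P_unit : P \in unitmx := spectral_unit A.
have P_inv : invmx P = P ^t*.
  by rewrite invmx_unitary ?spectral_unitarymx.
pose y := P *m x.
have xA : x ^t* *m invmx P = y ^t*.
  by rewrite P_inv /y trmx_mul map_mxM.
have -> : x ^t* *m A *m x = y ^t* *m diag_mx d *m y.
  by rewrite {1}A_eq !mulmxA xA -!mulmxA.
have -> : x ^t* *m x = y ^t* *m y.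
  by rewrite -xA -mulmxA mulKmx.
clearbody y; rewrite mul_mx_diag !mxE mulr_sumr; apply: ler_sum => k _.
rewrite !mxE mulrAC [_ * d 0 k]mulrC.
by apply: ler_wpM2r; rewrite // mulrC mul_conjC_ge0.
Qed.

End NormalQuadForm.

Lemma symmetric_quad_le (R : rcfType) n (M : 'M[R]_n) (lam : R) :
  M^T = M -> (forall mu, eigenvalue M mu -> mu <= lam) ->
  forall x : 'cV[R]_n, (x^T *m M *m x) 0 0 <= lam * (x^T *m x) 0 0.
Proof.
move=> M_sym M_le x; pose f := real_complex R; pose Mf := M ^ f.
have f_real r : f r \is Num.real by apply/complex_realP; exists r.
have Mf_herm : Mf \is hermsymmx.
  apply: realsym_hermsym; last by apply/mxOverP => i j; rewrite mxE f_real.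
  by apply/is_hermitianmxP; rewrite expr0 scale1r map_trmx M_sym map_mx_id.
have Mf_normal := hermitian_normalmx Mf_herm.
have d_le (j : 'I_n) : spectral_diag Mf 0 j <= f lam.
  have /mxOverP/(_ 0 j)/RRe_real dE := hermitian_spectral_diag_real Mf_herm.
  rewrite -dE lecR; apply: M_le.
  by have := eigenvalue_spectral_diag Mf_normal j; rewrite -dE eigenvalue_map.
have xf_conj : (map_mx f x) ^t* = map_mx f x^T.
  by apply/matrixP => i j; rewrite !mxE conj_Creal ?f_real.
rewrite -lecR; have := normalmx_quad_le Mf_normal (map_mx f x) d_le.
by rewrite xf_conj -!map_mxM !mxE rmorphM.
Qed.

End Rayleigh.

Section Gram.
Variables (R : comUnitRingType) (m n : nat) (A : 'M[R]_(m, n)).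
Let X := A *m invmx (A^T *m A).

Lemma trmx_invmx_gram : (invmx (A^T *m A))^T = invmx (A^T *m A).
Proof. by rewrite trmx_inv trmx_mul trmxK. Qed.

Lemma Emat_gram : Emat A = X *m X^T.
Proof. by rewrite /Emat /X trmx_mul trmx_invmx_gram !mulmxA. Qed.

Lemma invmx_gram : A^T *m A \in unitmx -> invmx (A^T *m A) = X^T *m X.
Proof.
move=> AA_unit; rewrite /X trmx_mul trmx_invmx_gram !mulmxA.
by rewrite -(mulmxA _ A^T) mulVmx ?mul1mx.
Qed.

End Gram.

Lemma Mmat_gram (R : comUnitRingType) N nl k (X : 'M[R]_(N, k)) :
  exists Y : 'M[R]_((N + nl.-1) * k, nl), Mmat nl (X *m X^T) = Y^T *m Y.
Proof.
exists ((tensmx (1%:M : 'M_(N + nl.-1)) X)^T *m Qmat R N nl).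
rewrite /Mmat trmx_mul trmxK -{1}(mul1mx (1%:M : 'M_(N + nl.-1))).
by rewrite -tensmx_mul trmx_tens trmx1 !mulmxA.
Qed.

Lemma quad_eigenvector (R : comPzRingType) n (M : 'M[R]_n) lam (v : 'cV_n) :
  M *m v = lam *: v -> (v^T *m M *m v) 0 0 = lam * sqnorm v.
Proof. by move=> Mv; rewrite -mulmxA Mv -scalemxAr mxE sqnormE. Qed.

Definition reduced_objective (R : fieldType) (a c g s : R) : R :=
  (a * s + c)^-1 + g * s.

Lemma objective_scale_eigenvector (R : fieldType) n (M : 'M[R]_n) lam c g
    (v : 'cV_n) (k : R) :
  M *m v = lam *: v -> sqnorm v = 1 ->
  objective M c g (k *: v) = reduced_objective lam c g (k ^+ 2).
Proof.
move=> Mv v_unit; have Mkv : M *m (k *: v) = lam *: (k *: v).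
  by rewrite -scalemxAr Mv !scalerA mulrC.
by rewrite /objective (quad_eigenvector Mkv) sqnormZ v_unit mulr1.
Qed.

Section ReducedObjective.
Variable R : rcfType.
Implicit Types a c g p s : R.

Lemma reduced_objective_le a c g p s : 0 < c -> 0 <= p -> p <= a * s ->
  reduced_objective a c g s <= (p + c)^-1 + g * s.
Proof.
move=> c_gt0 p_ge0 le_p_as; rewrite lerD2r lef_pV2 ?lerD2r //.
  by rewrite posrE ltr_wpDl // (le_trans p_ge0).
by rewrite posrE ltr_wpDl.
Qed.

Lemma reduced_objective_min0 a c g s : 0 < c -> 0 <= a <= g * c ^+ 2 -> 0 <= s ->
  reduced_objective a c g 0 <= reduced_objective a c g s.
Proof.
move=> c_gt0 /andP[a_ge0 le_a_gc2] s_ge0; rewrite /reduced_objective -subr_ge0.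
have as_c_gt0 : 0 < a * s + c by rewrite ltr_wpDl // mulr_ge0.
have -> : (a * s + c)^-1 + g * s - ((a * 0 + c)^-1 + g * 0)
    = s * (g * c * (a * s + c) - a) / (c * (a * s + c)).
  by field; rewrite !gt_eqF.
apply: divr_ge0; last by rewrite mulr_ge0 ?ltW.
rewrite mulr_ge0 // subr_ge0.
have g_ge0 : 0 <= g by rewrite -(@pmulr_lge0 _ (c ^+ 2)) ?exprn_gt0 // (le_trans a_ge0).
nra.
Qed.

Lemma reduced_argmin_ge0 a c g : 0 < c -> 0 < g -> g * c ^+ 2 < a ->
  0 <= 1 / Num.sqrt (g * a) - c / a.
Proof.
move=> c_gt0 g_gt0 lt_gc2_a.
have a_gt0 : 0 < a.
  by apply: le_lt_trans lt_gc2_a; rewrite mulr_ge0 ?sqr_ge0 ?ltW.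
set q := Num.sqrt _; have q_gt0 : 0 < q by rewrite sqrtr_gt0 mulr_gt0.
have q2 : q ^+ 2 = g * a by rewrite sqr_sqrtr // mulr_ge0 ?ltW.
have -> : 1 / q - c / a = (a - c * q) / (q * a) by field; rewrite !gt_eqF.
apply: divr_ge0; last by rewrite mulr_ge0 ?ltW.
rewrite subr_ge0; nra.
Qed.

Lemma reduced_objective_min a c g s : 0 < a -> 0 < c -> 0 < g -> 0 <= s ->
  reduced_objective a c g (1 / Num.sqrt (g * a) - c / a)
    <= reduced_objective a c g s.
Proof.
move=> a_gt0 c_gt0 g_gt0 s_ge0; rewrite /reduced_objective.
set q := Num.sqrt _; have q_gt0 : 0 < q by rewrite sqrtr_gt0 mulr_gt0.
have -> : g = q ^+ 2 / a.
  by rewrite sqr_sqrtr ?mulfK ?gt_eqF // mulr_ge0 // ltW.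
have as_c_gt0 : 0 < a * s + c by rewrite ltr_wpDl // mulr_ge0 // ltW.
rewrite -subr_ge0.
have -> : (a * s + c)^-1 + q ^+ 2 / a * s
    - ((a * (1 / q - c / a) + c)^-1 + q ^+ 2 / a * (1 / q - c / a))
    = (a - q * (a * s + c)) ^+ 2 / (a ^+ 2 * (a * s + c)).
  by field; rewrite !gt_eqF.
by apply: divr_ge0; rewrite ?sqr_ge0 ?mulr_ge0 ?sqr_ge0 ?ltW.
Qed.

End ReducedObjective.

Theorem theorem2 (R : rcfType) (N nh nl : nat)
  (hN : (0 < N)%N) (hnh : (0 < nh)%N) (hnl : (0 < nl)%N)
  (r : 'cV[R]_N)
  (hinv : (toepR nh r)^T *m toepR nh r \in unitmx)
  (sigma2 : R) (hsigma : 0 < sigma2)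
  (gamma2 : R) (hgamma : 0 < gamma2)
  (lam1 : R) (v1 : 'cV[R]_nl) :
  let Rm := toepR nh r in
  let E := Emat Rm in
  let c := \tr (sigma2 *: invmx (Rm^T *m Rm)) in
  let M := Mmat nl E in
  eigenvalue M lam1 ->
  (forall mu, eigenvalue M mu -> mu <= lam1) ->
  M *m v1 = lam1 *: v1 ->
  sqnorm v1 = 1 ->
  let lstar : 'cV[R]_nl :=
    if lam1 <= gamma2 * c ^+ 2 then 0
    else Num.sqrt (1 / Num.sqrt (gamma2 * lam1) - c / lam1) *: v1 in
  forall l : 'cV[R]_nl, objective M c gamma2 lstar <= objective M c gamma2 l.
Proof.
move=> Rm E c M _ M_le Mv1 v1_unit lstar l.
have [Y MY] : exists Y : 'M_((N + nl.-1) * nh, nl), M = Y^T *m Y.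
  by rewrite /M /E Emat_gram; exact: Mmat_gram.
have M_sym : M^T = M by rewrite MY trmx_mul trmxK.
have c_gt0 : 0 < c.
  rewrite /c mxtraceZ invmx_gram // mulr_gt0 // mxtrace_gram_gt0 //.
  by rewrite -invmx_gram // unitmx_inv.
have lam1_ge0 : 0 <= lam1.
  by rewrite -[lam1]mulr1 -v1_unit -(quad_eigenvector Mv1) MY gram_quad_ge0.
have obj_l : reduced_objective lam1 c gamma2 (sqnorm l) <= objective M c gamma2 l.
  apply: reduced_objective_le => //; first by rewrite MY gram_quad_ge0.
  by rewrite sqnormE symmetric_quad_le.
apply: le_trans obj_l.
pose k := if lam1 <= gamma2 * c ^+ 2 then 0
          else Num.sqrt (1 / Num.sqrt (gamma2 * lam1) - c / lam1).
have -> : lstar = k *: v1 by rewrite /lstar /k; case: ifP; rewrite ?scale0r.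
rewrite (objective_scale_eigenvector c gamma2 k Mv1 v1_unit) /k.
case: ifPn => [lam1_le | lam1_gt].
  by rewrite expr2 mul0r reduced_objective_min0 ?sqnorm_ge0 // lam1_ge0 lam1_le.
rewrite -ltNge in lam1_gt.
rewrite sqr_sqrtr ?reduced_argmin_ge0 // reduced_objective_min ?sqnorm_ge0 //.
exact: le_lt_trans (mulr_ge0 (ltW hgamma) (sqr_ge0 c)) lam1_gt.
Qed.
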